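(* Let $M=(S,\mathrm{Act},P)$ be an MDP, $T\subseteq S$, $\mathrm{opt}\in\{\min,\max\}$, $r$ the least fixed point of $\tilde D^{\mathrm{opt}}$, $Z=\{s\in S\mid\Pr^{\mathrm{opt}}_s(\Diamond T)=0\}$, and $\sigma$ a strategy with $\Pr^\sigma_s(\Diamond T)=\Pr^{\mathrm{opt}}_s(\Diamond T)$ for all $s\in S$. For $s\in S$ let $z(s)$ be the probability, in the Markov chain induced by $\sigma$ started at $s$, of the set of paths $s_0s_1\ldots$ for which there is $i$ with $s_i\in Z$ and $s_j\notin T$ for all $j<i$. Then for all $s\in S$: $r(s)<\infty$ implies $z(s)>0$.
   Context: An MDP is a tuple $M=(S,\mathrm{Act},P)$ with $S$ finite, $\mathrm{Act}$ finite, $P\colon S\times\mathrm{Act}\times S\to[0,1]$ with $\sum_{s'}P(s,a,s')\in\{0,1\}$; $\mathrm{Act}(s)=\{a\mid\sum_{s'}P(s,a,s')=1\}$ is nonempty for all $s$; $\mathrm{Post}(s,a)=\{s'\mid P(s,a,s')>0\}$. A strategy is $\sigma\colon S\to\mathrm{Act}$ with $\sigma(s)\in\mathrm{Act}(s)$, inducing a Markov chain with transitions $P(s,\sigma(s),\cdot)$; $\Pr^\sigma_s(\Diamond T)$ is the probability of visiting $T$ from $s$ and $\Pr^{\mathrm{opt}}_s(\Diamond T)=\mathrm{opt}_\sigma\Pr^\sigma_s(\Diamond T)$. $\mathbb{N}_\infty=\mathbb{N}\cup\{\infty\}$ with $\infty+1=\infty$. $\tilde D^{\mathrm{opt}}(r)(s)=\infty$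 for $s\in T$ and $\mathrm{opt}_{a\in\mathrm{Act}(s)}\big(\min_{s'\in\mathrm{Post}(s,a)}r(s')+[\exists u,v\in\mathrm{Post}(s,a)\colon r(u)\ne r(v)]\big)$ for $s\notin T$ ($[\varphi]\in\{0,1\}$ the Iverson bracket); its least fixed point w.r.t. the pointwise order exists. *)

From mathcomp Require Import all_boot all_order all_algebra.
From mathcomp Require Import boolp classical_sets reals.
Set Implicit Arguments. Unset Strict Implicit. Unset Printing Implicit Defensive.
Import Order.TTheory GRing.Theory Num.Theory.
Local Open Scope ring_scope.
Local Open Scope classical_set_scope.

Section MDP.
Variables (R : realType) (S A : finType).

Definition Act (P : S -> A -> S -> R) (s : S) : pred A :=
  [pred a | \sum_(s' : S) P s a s' == 1].

Definition Post (P : S -> A -> S -> R) (s : S) (a : A) : pred S :=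
  [pred s' | 0 < P s a s'].

Definition is_MDP (P : S -> A -> S -> R) : Prop :=
  (forall s a s', 0 <= P s a s' <= 1) /\
  (forall s a, \sum_(s' : S) P s a s' = 0 \/ \sum_(s' : S) P s a s' = 1) /\
  (forall s, exists a, a \in Act P s).

Definition is_strategy (P : S -> A -> S -> R) (sigma : S -> A) : Prop :=
  forall s, sigma s \in Act P s.

Definition induced (P : S -> A -> S -> R) (sigma : S -> A) : S -> S -> R :=
  fun s s' => P s (sigma s) s'.

(* untiln Q Av G n s = probability, in the Markov chain Q started at s, of the
   set of paths s_0 s_1 ... such that there is i <= n with s_i in G and
   s_j \notin Av for all j < i. *)
Fixpoint untiln (Q : S -> S -> R) (Av G : {set S}) (n : nat) (s : S) : R :=
  if s \in G then 1
  else if s \in Av then 0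
  else match n with
       | 0 => 0
       | n'.+1 => \sum_(s' : S) Q s s' * untiln Q Av G n' s'
       end.

(* Probability of the set of paths s_0 s_1 ... such that there is i with
   s_i in G and s_j \notin Av for all j < i: by sigma-additivity of the path
   measure, the supremum of the (increasing) step-bounded probabilities. *)
Definition until_prob (Q : S -> S -> R) (Av G : {set S}) (s : S) : R :=
  sup (range (fun n => untiln Q Av G n s)).

Definition reach_prob (Q : S -> S -> R) (T : {set S}) (s : S) : R :=
  until_prob Q (finset.set0) T s.

Inductive opt := Min | Max.

Definition Pr_opt (P : S -> A -> S -> R) (T : {set S}) (o : opt) (s : S) : R :=
  let E := [set reach_prob (induced P sigma) T s | sigma in is_strategy P] in
  match o with Min => inf E | Max => sup E end.

(* N_infinity, with None = infinity *)
Definition Ninf := option nat.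

Definition leNi (x y : Ninf) : bool :=
  match x, y with
  | _, None => true
  | None, Some _ => false
  | Some m, Some n => (m <= n)%N
  end.

Definition minNi (x y : Ninf) : Ninf := if leNi x y then x else y.
Definition maxNi (x y : Ninf) : Ninf := if leNi x y then y else x.

Definition addNi (x : Ninf) (k : nat) : Ninf :=
  match x with None => None | Some m => Some (m + k)%N end.

Definition Dtilde (P : S -> A -> S -> R) (T : {set S}) (o : opt)
    (r : S -> Ninf) (s : S) : Ninf :=
  if s \in T then None
  else
    let f a :=
      addNi (\big[minNi/None]_(s' | s' \in Post P s a) r s')
            (nat_of_bool [exists u, exists v,
               [&& u \in Post P s a, v \in Post P s a & r u != r v]]) in
    match o with
    | Min => \big[minNi/None]_(a | a \in Act P s) f a
    | Max => \big[maxNi/Some 0%N]_(a | a \in Act P s) f a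
    end.

Definition is_lfp (F : (S -> Ninf) -> S -> Ninf) (r : S -> Ninf) : Prop :=
  (forall s, F r s = r s) /\
  (forall r' : S -> Ninf, (forall s, F r' s = r' s) -> forall s, leNi (r s) (r' s)).

Definition Zset (P : S -> A -> S -> R) (T : {set S}) (o : opt) : {set S} :=
  [set s | Pr_opt P T o s == 0].

End MDP.

From mathcomp Require Import all_boot all_order all_algebra.
From mathcomp Require Import boolp classical_sets reals.
Import Order.TTheory GRing.Theory Num.Theory.
Local Open Scope ring_scope.

(* Let x be the probability of reaching T under sigma.  If z(s) = 0, then
   every state reachable from s before T lies outside Z, so x > 0 there; a
   minimum principle for the harmonic function x on that set gives x(s) = 1.
   On the other hand a finite rank r(s) forces x(s) < 1: follow a strategy tau
   realising the fixed-point equation of D~ (sigma itself for max, a minimising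
   action for min, and then x(s) <= Pr^tau_s(<>T) by optimality).  Along tau,
   every state of finite rank k either has all successors of rank <= k or one of
   rank < k; so among the states of finite rank reached almost surely, those of
   least rank form a closed set avoiding T, which is absurd. *)

Set Implicit Arguments.
Unset Strict Implicit.

Definition rank_compatible (R : realType) (S : finType) (Q : S -> S -> R)
    (r : S -> Ninf) : Prop :=
  forall u k, r u = Some k ->
    (exists2 v, 0 < Q u v & ~~ leNi (Some k) (r v)) \/
    (forall v, 0 < Q u v -> leNi (r v) (Some k)).

Section MarkovChain.
Variables (R : realType) (S : finType) (Q : S -> S -> R).
Hypothesis Q_ge0 : forall u v, 0 <= Q u v.
Hypothesis Q_sum1 : forall u, \sum_v Q u v = 1.

Lemma convex_eq_lb (f : S -> R) m u :
  (forall v, 0 < Q u v -> m <= f v) -> \sum_v Q u v * f v <= m ->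
  forall v, 0 < Q u v -> f v = m.
Proof.
move=> f_ge sum_le v Quv.
have term_ge0 w : 0 <= Q u w * (f w - m).
  have := Q_ge0 u w; rewrite le0r => /orP[/eqP -> | Quw]; first by rewrite mul0r.
  by rewrite mulr_ge0 ?subr_ge0 ?f_ge // ltW.
have sum0 : \sum_w Q u w * (f w - m) = 0.
  apply/le_anti; rewrite sumr_ge0 // andbT.
  under eq_bigr do rewrite mulrBr.
  by rewrite sumrB -mulr_suml Q_sum1 mul1r subr_le0.
have /eqP := psumr_eq0P (fun w _ => term_ge0 w) sum0 (i := v) isT.
by rewrite mulf_eq0 gt_eqF //= subr_eq0 => /eqP.
Qed.

Lemma convex_eq_ub (f : S -> R) m u :
  (forall v, 0 < Q u v -> f v <= m) -> m <= \sum_v Q u v * f v ->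
  forall v, 0 < Q u v -> f v = m.
Proof.
move=> f_le sum_ge v Quv; apply: oppr_inj.
apply: (@convex_eq_lb (fun w => - f w)) Quv => [w Quw|].
  by rewrite lerN2 f_le.
by under eq_bigr do rewrite mulrN; rewrite sumrN lerN2.
Qed.

Section Until.
Variables Av G : {set S}.

Lemma untiln_ge0 n s : 0 <= untiln Q Av G n s.
Proof.
elim: n s => [|n IHn] s /=; case: ifP => // _; case: ifP => // _.
by apply: sumr_ge0 => v _; rewrite mulr_ge0.
Qed.

Lemma untiln_le1 n s : untiln Q Av G n s <= 1.
Proof.
elim: n s => [|n IHn] s /=; case: ifP => // _; case: ifP => // _.
by rewrite -(Q_sum1 s); apply: ler_sum => v _; rewrite ler_piMr.
Qed.

Lemma untiln_leS n s : untiln Q Av G n s <= untiln Q Av G n.+1 s.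
Proof.
elim: n s => [|n IHn] s /=; case: ifP => // _; case: ifP => // _.
  by apply: sumr_ge0 => v _; apply: mulr_ge0 => //; exact: (untiln_ge0 0).
by apply: ler_sum => v _; rewrite ler_wpM2l.
Qed.

Lemma untiln_homo s :
  {homo (fun n => untiln Q Av G n s) : m n / (m <= n)%N >-> m <= n}.
Proof.
apply: homo_leq => [x|y x z|n]; [exact: lexx | exact: le_trans | exact: untiln_leS].
Qed.

Lemma has_sup_untiln s : has_sup (range (fun n => untiln Q Av G n s)).
Proof.
split; first by exists (untiln Q Av G 0 s), 0%N.
by exists 1 => _ [n _ <-]; apply: untiln_le1.
Qed.

Lemma untiln_le_until n s : untiln Q Av G n s <= until_prob Q Av G s.
Proof. by apply: sup_upper_bound; [exact: has_sup_untiln | exists n]. Qed.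

Lemma until_prob_ge0 s : 0 <= until_prob Q Av G s.
Proof. exact: le_trans (untiln_ge0 0 s) (untiln_le_until 0 s). Qed.

Lemma until_prob_le1 s : until_prob Q Av G s <= 1.
Proof.
apply: ge_sup => [|_ [n _ <-]]; last exact: untiln_le1.
by exists (untiln Q Av G 0 s), 0%N.
Qed.

Lemma until_prob_goal s : s \in G -> until_prob Q Av G s = 1.
Proof.
move=> sG; apply/le_anti; rewrite until_prob_le1 /=.
by have := untiln_le_until 0 s; rewrite /= sG.
Qed.

Lemma untiln_approx e : 0 < e ->
  exists N, forall v, until_prob Q Av G v - e <= untiln Q Av G N v.
Proof.
move=> e_gt0.
have /choice[n n_close] v : exists n, until_prob Q Av G v - e < untiln Q Av G n v.
  by have [_ [n _ <-]] := sup_adherent e_gt0 (has_sup_untiln v); exists n.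
exists (\max_v n v)%N => v.
by apply: le_trans (ltW (n_close v)) (untiln_homo _ (leq_bigmax v)).
Qed.

Lemma until_probE s : s \notin G -> s \notin Av ->
  until_prob Q Av G s = \sum_v Q s v * until_prob Q Av G v.
Proof.
move=> sG sAv; apply/le_anti/andP; split.
  apply: ge_sup => [|_ [[|n] _ <-]]; first by exists (untiln Q Av G 0 s), 0%N.
    rewrite /= (negbTE sG) (negbTE sAv).
    by apply: sumr_ge0 => v _; rewrite mulr_ge0 // until_prob_ge0.
  rewrite /= (negbTE sG) (negbTE sAv).
  by apply: ler_sum => v _; rewrite ler_wpM2l // untiln_le_until.
apply/ler_addgt0Pr => e e_gt0; rewrite -lerBlDr.
have [N N_close] := untiln_approx e_gt0.
apply: le_trans (untiln_le_until N.+1 s); rewrite /= (negbTE sG) (negbTE sAv).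
have -> : \sum_v Q s v * until_prob Q Av G v - e =
          \sum_v Q s v * (until_prob Q Av G v - e).
  by under [RHS]eq_bigr do rewrite mulrBr; rewrite sumrB -mulr_suml Q_sum1 mul1r.
by apply: ler_sum => v _; rewrite ler_wpM2l.
Qed.

Lemma until_prob_closed (C : {set S}) :
  (forall u, u \in C -> u \notin G) ->
  (forall u v, u \in C -> 0 < Q u v -> v \in C) ->
  forall u, u \in C -> until_prob Q Av G u = 0.
Proof.
move=> C_notin_G C_closed.
have untiln0 n u : u \in C -> untiln Q Av G n u = 0.
  elim: n u => [|n IHn] u uC /=; rewrite (negbTE (C_notin_G u uC)).
    by case: ifP.
  case: ifP => // _.
  apply: big1 => v _; have := Q_ge0 u v; rewrite le0r => /orP[/eqP -> | Quv].
    by rewrite mul0r.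
  by rewrite IHn ?mulr0 // (C_closed u).
move=> u uC; apply/le_anti; rewrite until_prob_ge0 andbT.
apply: ge_sup => [|_ [n _ <-]]; last by rewrite untiln0.
by exists (untiln Q Av G 0 u), 0%N.
Qed.

End Until.

Section Reach.
Variable T : {set S}.

Lemma reach_probE s : s \notin T ->
  reach_prob Q T s = \sum_v Q s v * reach_prob Q T v.
Proof. by move=> sT; rewrite /reach_prob until_probE ?inE. Qed.

Lemma reach_prob_eq1_succ u v : u \notin T -> reach_prob Q T u = 1 ->
  0 < Q u v -> reach_prob Q T v = 1.
Proof.
move=> uT xu1; apply: convex_eq_ub => [w _|]; first exact: until_prob_le1.
by rewrite -xu1 -reach_probE.
Qed.

Variable r : S -> Ninf.
Hypothesis rank_notin_T : forall u k, r u = Some k -> u \notin T.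
Hypothesis r_compatible : rank_compatible Q r.

Lemma reach_prob_lt1 u k : r u = Some k -> reach_prob Q T u < 1.
Proof.
move=> ru; rewrite lt_neqAle until_prob_le1 andbT; apply/negP => /eqP xu1.
pose reached j := [exists v, (r v == Some j) && (reach_prob Q T v == 1)].
have reached_k : exists j, reached j.
  by exists k; apply/existsP; exists u; rewrite ru xu1 !eqxx.
case: (ex_minnP reached_k) => m /existsP[um /andP[/eqP rum /eqP xum]] m_min.
have min_rank v j : r v = Some j -> reach_prob Q T v = 1 -> (m <= j)%N.
  by move=> rv xv; apply: m_min; apply/existsP; exists v; rewrite rv xv !eqxx.
pose C := [set v | (r v == Some m) && (reach_prob Q T v == 1)].
have C_notin_T w : w \in C -> w \notin T.
  by rewrite inE => /andP[/eqP /rank_notin_T].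
have C_closed w v : w \in C -> 0 < Q w v -> v \in C.
  move=> wC; have wT := C_notin_T w wC; move: wC.
  rewrite inE => /andP[/eqP rw /eqP xw] Qwv.
  case: (r_compatible rw) => [[v' Qwv'] | le_m].
    case rv': (r v') => [j|] //=.
    by rewrite (min_rank v' j rv' (reach_prob_eq1_succ wT xw Qwv')).
  have := le_m v Qwv; case rv: (r v) => [j|] //= le_jm.
  have xv := reach_prob_eq1_succ wT xw Qwv.
  rewrite inE rv xv !eqxx andbT.
  by apply/eqP; congr Some; apply/eqP; rewrite eqn_leq le_jm (min_rank v).
have umC : um \in C by rewrite inE rum xum !eqxx.
have : reach_prob Q T um = 0 := until_prob_closed _ C_notin_T C_closed umC.
by rewrite xum => /eqP; rewrite oner_eq0.
Qed.

Variable Z : {set S}.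
Hypothesis Z_reach0 : forall u, reach_prob Q T u = 0 -> u \in Z.

Lemma reach_prob_eq1 u : until_prob Q T Z u = 0 -> reach_prob Q T u = 1.
Proof.
pose W := [set w | until_prob Q T Z w == 0].
have W_notin_Z w : w \in W -> w \notin Z.
  by rewrite inE; apply: contraTN => /until_prob_goal ->; rewrite oner_eq0.
have W_succ w v : w \in W -> w \notin T -> 0 < Q w v -> v \in W.
  move=> wW wT Qwv; rewrite inE; apply/eqP.
  apply: (@convex_eq_lb (until_prob Q T Z)) Qwv => [v' _|].
    exact: until_prob_ge0.
  by rewrite -until_probE ?W_notin_Z //; move: wW; rewrite inE => /eqP ->.
pose x := reach_prob Q T.
move=> zu0; have uW : u \in W by rewrite inE zu0.
have [um umW x_min] := arg_minP x uW.
apply/le_anti; rewrite until_prob_le1 /=; apply: le_trans (x_min u uW).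
rewrite leNgt; apply/negP => xum_lt1.
pose C := [set w in W | x w == x um].
have C_notin_T w : w \in C -> w \notin T.
  case/setIdP=> _ /eqP xw; apply: contraTN xum_lt1 => wT.
  by rewrite -xw /x /reach_prob until_prob_goal // ltxx.
have C_closed w v : w \in C -> 0 < Q w v -> v \in C.
  move=> wC Qwv; have wT := C_notin_T w wC; have /setIdP[wW /eqP xw] := wC.
  apply/setIdP; split; first exact: W_succ wW wT Qwv.
  apply/eqP; apply: (@convex_eq_lb x) Qwv => [v' Qwv'|].
    exact/x_min/(W_succ w).
  by rewrite -xw /x -reach_probE.
have umC : um \in C by apply/setIdP.
have x_um0 : x um = 0 := until_prob_closed _ C_notin_T C_closed umC.
by have := W_notin_Z um umW; rewrite Z_reach0.
Qed.

End Reach.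
End MarkovChain.

Lemma leNi_refl x : leNi x x.
Proof. by case: x => /=. Qed.

Lemma leNi_trans y x z : leNi x y -> leNi y z -> leNi x z.
Proof. by case: x; case: y; case: z => //= a b c; apply: leq_trans. Qed.

Lemma leNi_total x y : leNi x y || leNi y x.
Proof. by case: x; case: y => //= a b; apply: leq_total. Qed.

Lemma leNi_maxl x y : leNi x (maxNi x y).
Proof. by rewrite /maxNi; case: ifP => // _; apply: leNi_refl. Qed.

Lemma leNi_maxr x y : leNi y (maxNi x y).
Proof.
rewrite /maxNi; case: ifP => [_|yx]; first exact: leNi_refl.
by have := leNi_total x y; rewrite yx.
Qed.

Lemma bigminNi_attained (I : finType) (p : pred I) (F : I -> Ninf) j :
  \big[minNi/None]_(i | p i) F i = Some j -> exists2 i, p i & F i = Some j.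
Proof.
have : \big[minNi/None]_(i | p i) F i = None \/
       exists2 i, p i & F i = \big[minNi/None]_(i | p i) F i.
  apply: (big_rec (fun x => x = None \/ exists2 i, p i & F i = x)) => [|i x pi Kx].
    by left.
  by rewrite /minNi; case: ifP => _ //; right; exists i.
by case=> [-> // | [i pi <-] Fi]; exists i.
Qed.

Lemma leNi_bigmax_cond (I : finType) (p : pred I) (F : I -> Ninf) i :
  p i -> leNi (F i) (\big[maxNi/Some 0%N]_(j | p j) F j).
Proof.
move=> pi; have : i \in index_enum I by rewrite mem_index_enum.
elim: (index_enum I) => [|a l IHl] //; rewrite big_cons inE.
case/orP => [/eqP <- | il]; first by rewrite pi leNi_maxl.
by case: (p a); [apply: leNi_trans (IHl il) (leNi_maxr _ _) | apply: IHl].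
Qed.

Section MDP.
Variables (R : realType) (S A : finType) (P : S -> A -> S -> R).

Lemma induced_ge0 : is_MDP P -> forall tau u v, 0 <= induced P tau u v.
Proof. by case=> P01 _ tau u v; have /andP[] := P01 u (tau u) v. Qed.

Lemma induced_sum1 tau :
  is_strategy P tau -> forall u, \sum_v induced P tau u v = 1.
Proof. by move=> tauS u; have := tauS u; rewrite inE => /eqP. Qed.

Lemma Pr_opt_Min_le T tau s : is_MDP P -> is_strategy P tau ->
  Pr_opt P T Min s <= reach_prob (induced P tau) T s.
Proof.
move=> MDP tauS; apply: ge_inf; last by exists tau.
exists 0 => _ [tau' tau'S <-].
exact: until_prob_ge0 (induced_ge0 MDP tau') (induced_sum1 tau'S) _ _ _.
Qed.

Definition action_rank (r : S -> Ninf) (s : S) (a : A) : Ninf :=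
  addNi (\big[minNi/None]_(s' | s' \in Post P s a) r s')
        (nat_of_bool [exists u, exists v,
           [&& u \in Post P s a, v \in Post P s a & r u != r v]]).

Lemma DtildeE T o r s : Dtilde P T o r s =
  if s \in T then None else
  match o with
  | Min => \big[minNi/None]_(a | a \in Act P s) action_rank r s a
  | Max => \big[maxNi/Some 0%N]_(a | a \in Act P s) action_rank r s a
  end.
Proof. by []. Qed.

Lemma action_rank_compatible r tau :
  (forall u k, r u = Some k -> leNi (action_rank r u (tau u)) (Some k)) ->
  rank_compatible (induced P tau) r.
Proof.
move=> tau_le u k ru; have := tau_le u k ru; rewrite /action_rank /induced.
case min_post: (\big[minNi/None]_(s' | s' \in Post P u (tau u)) r s') => [j|] //=.
have [w wPost rw] := bigminNi_attained min_post.
case split: [exists u0, exists v, _]; rewrite /= ?addn1 ?addn0 => le_jk.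
  by left; exists w; rewrite // rw /= -ltnNge.
right => v vPost; move/negbT/existsPn/(_ v)/existsPn/(_ w): split.
by rewrite [v \in _]vPost wPost negbK rw => /eqP ->.
Qed.

Section FixedPoint.
Variables (T : {set S}) (r : S -> Ninf) (sigma : S -> A).
Hypothesis sigmaS : is_strategy P sigma.

Lemma Dtilde_fix_notin o : (forall s, Dtilde P T o r s = r s) ->
  forall u k, r u = Some k -> u \notin T.
Proof.
by move=> r_fix u k ru; apply/negP => uT; move: (r_fix u); rewrite DtildeE uT ru.
Qed.

Lemma Dtilde_Max_fix_action_rank : (forall s, Dtilde P T Max r s = r s) ->
  forall u k, r u = Some k -> leNi (action_rank r u (sigma u)) (Some k).
Proof.
move=> r_fix u k ru; have := r_fix u.
rewrite DtildeE (negbTE (Dtilde_fix_notin r_fix ru)) ru => <-.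
exact: leNi_bigmax_cond.
Qed.

Lemma Dtilde_Min_fix_strategy : (forall s, Dtilde P T Min r s = r s) ->
  exists2 tau, is_strategy P tau &
    forall u k, r u = Some k -> leNi (action_rank r u (tau u)) (Some k).
Proof.
move=> r_fix.
pose tau u :=
  odflt (sigma u) [pick a in Act P u | leNi (action_rank r u a) (r u)].
exists tau => [u | u k ru]; rewrite /tau.
  by case: pickP => [a /andP[] | _ /=]; last exact: sigmaS.
case: pickP => [a /andP[_ le_a] | no_act] /=.
- by rewrite -ru.
- have := r_fix u; rewrite DtildeE (negbTE (Dtilde_fix_notin r_fix ru)) ru.
  case/bigminNi_attained => a aAct a_eq.
  by have := no_act a; rewrite aAct a_eq ru leNi_refl.
Qed.

End FixedPoint.
End MDP.

Theorem lemma10 (R : realType) (S A : finType) (P : S -> A -> S -> R)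
    (T : {set S}) (o : opt) (r : S -> Ninf) (sigma : S -> A) :
  is_MDP P ->
  is_lfp (Dtilde P T o) r ->
  is_strategy P sigma ->
  (forall s, reach_prob (induced P sigma) T s = Pr_opt P T o s) ->
  forall s, r s != None ->
    0 < until_prob (induced P sigma) T (Zset P T o) s.
Proof.
move=> MDP [r_fix _] sigmaS sigma_opt s; case rs: (r s) => [k|] // _.
have Q_ge0 := induced_ge0 MDP sigma.
have Q_sum1 := induced_sum1 sigmaS.
have x_lt1 : reach_prob (induced P sigma) T s < 1.
  have rank_notin_T := Dtilde_fix_notin r_fix.
  case: o in r_fix sigma_opt rank_notin_T *.
    have [tau tauS tau_le] := Dtilde_Min_fix_strategy sigmaS r_fix.
    rewrite sigma_opt; apply: le_lt_trans (Pr_opt_Min_le T s MDP tauS) _.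
    exact: (reach_prob_lt1 (induced_ge0 MDP tau) (induced_sum1 tauS) rank_notin_T
                           (action_rank_compatible tau_le) rs).
  have sigma_le := Dtilde_Max_fix_action_rank sigmaS r_fix.
  exact: (reach_prob_lt1 Q_ge0 Q_sum1 rank_notin_T
                         (action_rank_compatible sigma_le) rs).
rewrite lt_def until_prob_ge0 // andbT; apply: contraTneq x_lt1 => z0.
rewrite (reach_prob_eq1 Q_ge0 Q_sum1 _ z0) ?ltxx // => u xu0.
by rewrite inE -sigma_opt xu0.
Qed.
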